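(* Let $G$ be a connected bipartite graph with vertex set $\{u_1,\dots,u_n\}$, $n\ge2$, and let $\mathcal{H}=\{H_1,\dots,H_n\}$ be a family of graphs such that $H_i\notin\mathcal{G}$ for some $i$. Then $\dim_l(G\circ\mathcal{H})=\sum_{i=1}^n\operatorname{adim}_l(H_i)$.
   Context: All graphs are finite and simple with at least one vertex. $d_G$ is shortest-path distance ($+\infty$ between components), $d_{G,2}=\min\{d_G,2\}$; $s$ distinguishes $x,y$ w.r.t. $d$ if $d(s,x)\ne d(s,y)$. $\dim_l(G)$: minimum size of $S\subseteq V(G)$ such that any two adjacent vertices are distinguished w.r.t. $d_G$ by some vertex of $S$. $\operatorname{adim}_l(H)$: minimum size of $S\subseteq V(H)$ such that any two adjacent vertices are distinguished w.r.t. $d_{H,2}$ by some vertex of $S$; minimum such sets are local adjacency bases. $\mathcal{G}$: class of graphs $H$ such that every local adjacency basis $B$ of $H$ satisfies $B\subseteq N_H(v)$ for some $v\in V(H)$. Lexicographic product $G\circ\mathcal{H}$: vertex set $\bigcup_i\{u_i\}\times V(H_i)$, $(u_i,v)\sim(u_j,w)$ iff $u_iu_j\in E(G)$, or $i=j$ and $vw\in E(H_i)$. *)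

From mathcomp Require Import all_boot.
Set Implicit Arguments. Unset Strict Implicit. Unset Printing Implicit Defensive.

Record sgraph := SGraph {
  vert :> finType;
  adj : rel vert;
  adj_sym : symmetric adj;
  adj_irr : irreflexive adj;
  vert_nonempty : 0 < #|vert| }.

Section Dist.
Variables (T : finType) (e : rel T).

Fixpoint within (k : nat) (x y : T) : bool :=
  if k is k'.+1 then within k' x y || [exists z, within k' x z && e z y]
  else x == y.

(* shortest-path distance; None encodes +infinity *)
Definition dist (x y : T) : option nat :=
  let k := find (fun k => within k x y) (iota 0 #|T|) in
  if k < #|T| then Some k else None.

Definition dist2 (x y : T) : nat :=
  if dist x y is Some k then minn k 2 else 2.

Definition local_resolving {D : eqType} (d : T -> T -> D) (S : {set T}) : bool :=
  [forall x, forall y, e x y ==> [exists s in S, d s x != d s y]].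

(* minimum size of a local resolving set (V(G) itself is one) *)
Definition local_dim {D : eqType} (d : T -> T -> D) : nat :=
  \big[minn/#|T|]_(S : {set T} | local_resolving d S) #|S|.

Definition local_metric_dim : nat := local_dim dist.
Definition local_adj_dim : nat := local_dim dist2.

Definition local_adj_basis (B : {set T}) : Prop :=
  local_resolving dist2 B /\ #|B| = local_adj_dim.

Definition open_nbhd (v : T) : {set T} := [set w | e v w].

Definition connected_graph : Prop := forall x y : T, connect e x y.

Definition bipartite : Prop :=
  exists f : T -> bool, forall x y, e x y -> f x != f y.
End Dist.

Definition in_classG (H : sgraph) : Prop :=
  forall B : {set H}, local_adj_basis (@adj H) B ->
    exists v : H, B \subset open_nbhd (@adj H) v.

Definition lex_adj (G : sgraph) (H : G -> sgraph) : rel {u : G & H u} :=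
  fun x y => adj (tag x) (tag y) ||
             ((tag x == tag y) && adj (tagged x) (tagged_as x y)).

(* Two vertices (u,a), (v,b) of the lexicographic product are at the distance
   of u and v in G when u <> v, and at distance min (d_{H_u}(a,b), 2) when u = v
   (every vertex of G has a neighbour).  Hence a local metric generator, traced
   on each fibre, is a local adjacency generator of that fibre, which gives the
   lower bound.  Conversely take a local adjacency basis B_u of every H_u, where
   B_i is contained in no open neighbourhood (possible since H_i is not in the
   class).  Pairs inside a fibre are resolved by B_u.  Pairs in adjacent fibres u,
   v are resolved by some (i,c), c in B_i: if i = u, choose c not adjacent to a,
   so (i,c) is at distance 0 or 2 from (u,a) but 1 from (v,b); if i is neither u
   nor v, bipartiteness makes d_G(i,u) and d_G(i,v) of different parity. *)

From Stdlib Require Import Classical.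
From mathcomp Require Import all_boot order.
Set Implicit Arguments. Unset Strict Implicit. Unset Printing Implicit Defensive.
Import Order.TTheory.

Section Distance.
Variables (T : finType) (e : rel T).
Implicit Types (x y z : T) (k : nat).

Lemma withinS k x y :
  within e k.+1 x y = within e k x y || [exists z, within e k x z && e z y].
Proof. by []. Qed.

Lemma within1 x y : within e 1 x y = (x == y) || e x y.
Proof.
rewrite withinS; congr (_ || _); apply/existsP/idP => [[z /andP[/eqP-> //]]|exy].
by exists x; rewrite exy andbT; exact: eqxx.
Qed.

Lemma withinSr k x y z : within e k x z -> e z y -> within e k.+1 x y.
Proof.
by move=> wxz ezy; rewrite withinS; apply/orP; right; apply/existsP; exists z; rewrite wxz.
Qed.

Lemma within_mono j k x y : j <= k -> within e j x y -> within e k x y.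
Proof.
by move/subnK <-; elim: (k - j) => // m IH /IH w; rewrite addSn withinS w.
Qed.

Lemma path_within x p : path e x p -> within e (size p) x (last x p).
Proof.
elim/last_ind: p => [_|p z IH]; first exact: eqxx.
rewrite rcons_path size_rcons last_rcons.
by case/andP=> /IH; apply: withinSr.
Qed.

Lemma dist_Some_within k x y :
  k < #|T| -> within e k x y -> exists d, dist e x y = Some d.
Proof.
move=> lt_k w; rewrite /dist; set P := fun k => within e k x y.
have : has P (iota 0 #|T|) by apply/hasP; exists k; rewrite ?mem_iota.
by rewrite has_find size_iota => ->; eexists.
Qed.

Lemma dist_SomeP x y d :
  dist e x y = Some d <->
  [/\ d < #|T|, within e d x y & forall j, j < d -> ~~ within e j x y].
Proof.
have dist_Some k : dist e x y = Some k ->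
    [/\ k < #|T|, within e k x y & forall j, j < k -> ~~ within e j x y].
  rewrite /dist; set P := fun k => within e k x y.
  case: ifP => // lt_find [<-]; split=> //.
    have := nth_find 0 (a := P) (s := iota 0 #|T|).
    by rewrite has_find size_iota lt_find nth_iota // add0n; apply.
  move=> j lt_j; have lt_jT := ltn_trans lt_j lt_find.
  by have := before_find 0 lt_j; rewrite nth_iota // add0n /P => ->.
split=> [/dist_Some | [lt_d w_d min_d]]; first by [].
have [k dist_k] := dist_Some_within lt_d w_d.
have [_ w_k min_k] := dist_Some k dist_k.
suff -> : d = k by [].
by case: (ltngtP d k) => [/min_k | /min_d |]; rewrite ?w_d ?w_k.
Qed.

Lemma connect_dist x y : connect e x y -> exists d, dist e x y = Some d.
Proof.
case/connectP=> p e_p ->; case: (shortenP e_p) => q e_q uniq_q _.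
apply: (dist_Some_within _ (path_within e_q)).
rewrite -ltnS -[(size q).+1]/(size (x :: q)) -(card_uniqP uniq_q).
exact: max_card.
Qed.

Lemma dist_eq0 x y : (dist e x y == Some 0) = (x == y).
Proof.
apply/eqP/eqP => [/dist_SomeP[_ /eqP] // | <-].
apply/dist_SomeP; split; [by apply/card_gt0P; exists x | exact: eqxx | by []].
Qed.

Lemma dist_adj x y : x != y -> e x y -> dist e x y = Some 1.
Proof.
move=> nxy exy; apply/dist_SomeP; split.
- by apply/card_gt1P; exists x, y.
- by rewrite within1 exy orbT.
- by case=> //= _; rewrite (negPf nxy).
Qed.

Lemma dist2E x y : dist2 e x y = if x == y then 0 else if e x y then 1 else 2.
Proof.
rewrite /dist2; case: eqVneq => [<- | nxy].
  by have /eqP -> : dist e x x == Some 0 by rewrite dist_eq0.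
case: ifP => [/(dist_adj nxy) -> // | nexy].
case dxy: dist => [[|[|k]]|] //; case/dist_SomeP: dxy => _.
  by rewrite /= (negPf nxy).
by rewrite within1 (negPf nxy) nexy.
Qed.

Lemma connected_neighbor :
  connected_graph e -> 1 < #|T| -> forall x, exists y, e x y.
Proof.
move=> conn T2 x; have [y nyx] : exists y, y != x.
  case/card_gt1P: T2 => y [z [_ _ nyz]].
  by case: (eqVneq y x) => [<-|]; [exists z; rewrite eq_sym | exists y].
case/connectP: (conn x y) => -[/= _ eyx | z p /= /andP[exz _] _].
  by rewrite eyx eqxx in nyx.
by exists z.
Qed.

Section Bipartite.
Variable f : T -> bool.
Hypothesis f_bipartition : forall x y, e x y -> f x != f y.

Lemma odd_minimal_within k x y :
  within e k x y -> (forall j, j < k -> ~~ within e j x y) -> odd k = (f x != f y).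
Proof.
elim: k y => [y /eqP <- _ | k IH y]; first by rewrite eqxx.
rewrite withinS => /orP[w_k min_k |]; first by have := min_k k (ltnSn k); rewrite w_k.
case/existsP=> z /andP[w_xz ezy] min_k.
have min_z j : j < k -> ~~ within e j x z.
  by move=> lt_jk; apply: contra (min_k j.+1 lt_jk) => w; apply: withinSr w ezy.
rewrite /= (IH z w_xz min_z); move: (f_bipartition ezy).
by case: (f x); case: (f y); case: (f z).
Qed.

Lemma dist_odd x y d : dist e x y = Some d -> odd d = (f x != f y).
Proof. by case/dist_SomeP=> _; apply: odd_minimal_within. Qed.

Lemma bipartite_dist_adj_neq s x y dx dy :
  e x y -> dist e s x = Some dx -> dist e s y = Some dy -> dx != dy.
Proof.
move=> exy /dist_odd odd_x /dist_odd odd_y; apply: contra_neq (f_bipartition exy).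
move=> dxy; move: odd_y; rewrite -dxy odd_x.
by case: (f s); case: (f x); case: (f y).
Qed.

End Bipartite.
End Distance.

Section LocalDimension.
Variables (T : finType) (e : rel T) (D : eqType) (d : T -> T -> D).

Lemma local_dim_le S : local_resolving e d S -> local_dim e d <= #|S|.
Proof.
by move=> res_S; rewrite /local_dim -minEnat; exact: (bigmin_le_cond (T := nat)).
Qed.

Lemma local_dim_attained :
  local_resolving e d setT ->
  exists2 S, local_resolving e d S & #|S| = local_dim e d.
Proof.
move=> res_T; rewrite /local_dim -minEnat.
rewrite (bigmin_eq_arg (T := nat) _ _ _ _ res_T (fun S _ => max_card S)).
by case: (arg_minP (fun S : {set T} => #|S|) res_T) => S res_S _; exists S.
Qed.

Lemma local_resolving_setT :
  irreflexive e -> (forall x y, d x x = d x y -> x = y) -> local_resolving e d setT.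
Proof.
move=> e_irr d_inj; apply/forallP=> x; apply/forallP=> y; apply/implyP=> exy.
apply/existsP; exists x; rewrite in_setT /=; apply/eqP=> /d_inj eq_xy.
by rewrite eq_xy e_irr in exy.
Qed.

End LocalDimension.

Lemma local_resolving_dist_setT (T : finType) (e : rel T) :
  irreflexive e -> local_resolving e (dist e) setT.
Proof.
move=> e_irr; apply: local_resolving_setT => // x y.
have /eqP -> : dist e x x == Some 0 by rewrite dist_eq0.
by move/esym/eqP; rewrite dist_eq0 => /eqP.
Qed.

Lemma local_resolving_dist2_setT (T : finType) (e : rel T) :
  irreflexive e -> local_resolving e (dist2 e) setT.
Proof.
move=> e_irr; apply: local_resolving_setT => // x y; rewrite !dist2E eqxx.
by case: eqVneq => // _; case: ifP.
Qed.

Lemma local_adj_basis_exists (T : finType) (e : rel T) :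
  irreflexive e -> exists B : {set T}, local_adj_basis e B.
Proof.
move/local_resolving_dist2_setT/local_dim_attained => [B res_B card_B].
by exists B.
Qed.

Lemma not_in_classG_basis (H : sgraph) :
  ~ in_classG H ->
  exists2 B : {set H}, local_adj_basis (@adj H) B &
    forall v, ~~ (B \subset open_nbhd (@adj H) v).
Proof.
move=> notG; apply: NNPP => no_B; apply: notG => B basis_B.
apply: NNPP => no_v; apply: no_B; exists B => // v.
by apply/negP => sub_Bv; apply: no_v; exists v.
Qed.

Lemma bases_avoiding_nbhds (G : sgraph) (H : G -> sgraph) i :
  ~ in_classG (H i) ->
  exists B : forall u, {set H u},
    (forall u, local_adj_basis (@adj (H u)) (B u)) /\
    (forall a : H i, ~~ (B i \subset open_nbhd (@adj (H i)) a)).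
Proof.
move=> /not_in_classG_basis [Bi [res_Bi card_Bi] far_Bi].
pose good u (B : {set H u}) :=
  [&& local_resolving (@adj (H u)) (dist2 (@adj (H u))) B,
      #|B| == local_adj_dim (@adj (H u)) &
      (u == i) ==> [forall a, ~~ (B \subset open_nbhd (@adj (H u)) a)]].
have good_ex u : exists B, good u B.
  case: (eqVneq u i) => [-> | ne_ui].
    by exists Bi; rewrite /good res_Bi card_Bi !eqxx /=; apply/forallP.
  have [B [res_B card_B]] := local_adj_basis_exists (@adj_irr (H u)).
  by exists B; rewrite /good res_B card_B eqxx (negPf ne_ui).
exists (fun u => xchoose (good_ex u)); split=> [u | ].
  by have /and3P[res_B /eqP card_B _] := xchooseP (good_ex u).
by have /and3P[_ _] := xchooseP (good_ex i); rewrite eqxx => /forallP.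
Qed.

Section Lexicographic.
Variables (G : sgraph) (H : G -> sgraph).
Local Notation T := {u : G & H u}.
Local Notation P := (@lex_adj G H).
Local Notation tg a := (Tagged (fun u : G => H u) a).

Definition fibre_rep (u : G) : H u := xchoose (card_gt0P (vert_nonempty (H u))).

Lemma lex_adj_fibre u (a b : H u) : P (tg a) (tg b) = adj a b.
Proof. by rewrite /lex_adj /= adj_irr eqxx /= tagged_asE. Qed.

Lemma lex_adj_tagC x y : tag x != tag y -> P x y = adj (tag x) (tag y).
Proof. by rewrite /lex_adj => /negPf ->; rewrite orbF. Qed.

Lemma lex_adj_irr : irreflexive P.
Proof. by case=> u a; rewrite lex_adj_fibre adj_irr. Qed.

Lemma card_lex_fibres (S : {set T}) :
  #|S| = \sum_(u : G) #|[set a : H u | tg a \in S]|.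
Proof.
rewrite -sum1_card (partition_big tag xpredT) //=; apply: eq_bigr => u _.
rewrite -(card_imset _ (@eq_from_Tagged _ (fun u : G => H u) u)) -sum1_card.
apply: eq_bigl => -[v b]; apply/andP/imsetP => [[S_b /eqP /= v_u] | [a]].
  by subst v; exists b; rewrite ?inE.
by rewrite inE => S_a ->; rewrite S_a /=.
Qed.

Lemma card_base_le_lex : #|G| <= #|{: T}|.
Proof.
by apply: (@leq_card _ _ (fun u => tg (fibre_rep u))) => u v /(congr1 tag).
Qed.

Lemma within_lex_tag k x y : within P k x y -> within (@adj G) k (tag x) (tag y).
Proof.
elim: k y => [y /eqP -> | k IH y]; first exact: eqxx.
rewrite withinS => /orP[/IH /(within_mono (leqnSn k)) // |].
case/existsP=> z /andP[/IH w_z]; rewrite /lex_adj => /orP[adj_zy | /andP[/eqP <- _]].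
  exact: withinSr w_z adj_zy.
exact: within_mono (leqnSn k) w_z.
Qed.

Lemma within_lex_lift k x y :
  tag x != tag y -> within (@adj G) k (tag x) (tag y) -> within P k x y.
Proof.
elim: k y => [y ne_xy /eqP eq_xy | k IH y ne_xy].
  by rewrite eq_xy eqxx in ne_xy.
rewrite withinS => /orP[/(IH y ne_xy) /(within_mono (leqnSn k)) // |].
case/existsP=> z /andP[w_z adj_zy]; case: (eqVneq (tag x) z) => [x_z | ne_xz].
  apply: (within_mono (isT : 1 <= k.+1)).
  by rewrite within1 lex_adj_tagC // x_z adj_zy orbT.
rewrite withinS; apply/orP; right; apply/existsP; exists (tg (fibre_rep z)).
rewrite IH //= lex_adj_tagC //= eq_sym.
by apply: contraTneq adj_zy => ->; rewrite adj_irr.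
Qed.

Lemma dist_lex_fibre u w (a b : H u) :
  adj u w -> dist P (tg a) (tg b) = Some (dist2 (@adj (H u)) a b).
Proof.
move=> adj_uw; have ne_wu : w != u by apply: contraTneq adj_uw => ->; rewrite adj_irr.
have ne_ab : (a != b) = (tg a != tg b).
  by apply/idP/idP; apply: contra_neq; [exact: eq_from_Tagged | move->].
apply/dist_SomeP; rewrite dist2E; case: eqVneq ne_ab => [<- _ | _ /esym ne_ab].
  by split; [apply/card_gt0P; exists (tg a) | exact: eqxx | by []].
have lex_ab : P (tg a) (tg b) = adj a b by rewrite lex_adj_fibre.
case: ifP => adj_ab.
  split; [by apply/card_gt1P; exists (tg a), (tg b) | |].
    by rewrite within1 lex_ab adj_ab orbT.
  by case=> //= _; rewrite (negPf ne_ab).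
have ne_wa : tg (fibre_rep w) != tg a by apply: contra_neq ne_wu => /(congr1 tag).
have ne_wb : tg (fibre_rep w) != tg b by apply: contra_neq ne_wu => /(congr1 tag).
split.
- apply/card_gt2P; exists (tg a), (tg b), (tg (fibre_rep w)).
  by rewrite ne_ab (eq_sym (tg b)) ne_wb ne_wa.
- rewrite withinS; apply/orP; right; apply/existsP; exists (tg (fibre_rep w)).
  rewrite within1 !lex_adj_tagC //= ?adj_uw 1?adj_sym ?orbT //.
  by rewrite eq_sym.
- by case=> [|[|]] // _; rewrite within1 (negPf ne_ab) lex_ab adj_ab.
Qed.

Section Connected.
Hypothesis G_conn : connected_graph (@adj G).

Lemma dist_lex_tagC x y :
  tag x != tag y -> dist P x y = dist (@adj G) (tag x) (tag y).
Proof.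
move=> ne_xy; have [d dist_d] := connect_dist (G_conn (tag x) (tag y)).
rewrite dist_d; case/dist_SomeP: dist_d => lt_d w_d min_d; apply/dist_SomeP; split.
- exact: leq_trans lt_d card_base_le_lex.
- exact: within_lex_lift.
- by move=> j /min_d; apply: contra; apply: within_lex_tag.
Qed.

Hypothesis G_nontrivial : 1 < #|G|.

Lemma lex_resolving_fibre S u :
  local_resolving P (dist P) S ->
  local_resolving (@adj (H u)) (dist2 (@adj (H u))) [set a : H u | tg a \in S].
Proof.
move=> res_S; have [w adj_uw] := connected_neighbor G_conn G_nontrivial u.
apply/forallP=> a; apply/forallP=> b; apply/implyP=> adj_ab.
move/forallP/(_ (tg a))/forallP/(_ (tg b))/implyP: res_S.
rewrite lex_adj_fibre => /(_ adj_ab) /existsP[[v c] /andP[S_c]].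
case: (eqVneq v u) => [v_u | ne_vu]; last by rewrite !dist_lex_tagC ?eqxx.
subst v; rewrite !(dist_lex_fibre _ _ adj_uw) => neq.
by apply/existsP; exists c; rewrite inE S_c; apply: contra_neq neq => ->.
Qed.

Lemma lex_resolving_bases (f : G -> bool) (B : forall u, {set H u}) i :
  (forall u v, adj u v -> f u != f v) ->
  (forall u, local_resolving (@adj (H u)) (dist2 (@adj (H u))) (B u)) ->
  (forall a : H i, ~~ (B i \subset open_nbhd (@adj (H i)) a)) ->
  local_resolving P (dist P) [set x | tagged x \in B (tag x)].
Proof.
move=> f_bip B_res Bi_far; set S := [set x | _].
have resolver x y :
    tag x = i -> adj (tag x) (tag y) -> [exists s in S, dist P s x != dist P s y].
  case: x => u a /= u_i adj_iv; subst i.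
  have ne_iv : tag (tg a) != tag y by apply: contraTneq adj_iv => /= ->; rewrite adj_irr.
  have /subsetPn[c Bc] := Bi_far a; rewrite inE => nadj_ac.
  apply/existsP; exists (tg c); rewrite inE Bc /= (dist_lex_fibre _ _ adj_iv).
  rewrite dist_lex_tagC // (dist_adj ne_iv adj_iv) dist2E adj_sym (negPf nadj_ac).
  by case: (c == a).
apply/forallP=> -[u a]; apply/forallP=> -[v b]; apply/implyP.
rewrite /lex_adj /= => /orP[adj_uv | /andP[/eqP v_u]].
- case: (eqVneq u i) => [u_i | ne_ui]; first exact: resolver.
  case: (eqVneq v i) => [v_i | ne_vi].
    rewrite adj_sym in adj_uv.
    have /existsP[s /andP[S_s neq]] := resolver (tg b) (tg a) v_i adj_uv.
    by apply/existsP; exists s; rewrite S_s eq_sym.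
  have /subsetPn[c Bc _] := Bi_far (fibre_rep i).
  apply/existsP; exists (tg c); rewrite inE Bc /= !dist_lex_tagC 1?eq_sym //=.
  have [du dist_u] := connect_dist (G_conn i u).
  have [dv dist_v] := connect_dist (G_conn i v).
  have := bipartite_dist_adj_neq f_bip adj_uv dist_u dist_v.
  by rewrite dist_u dist_v; apply: contra_neq => -[].
- subst v; rewrite tagged_asE => adj_ab.
  have [w adj_uw] := connected_neighbor G_conn G_nontrivial u.
  move/forallP/(_ a)/forallP/(_ b)/implyP/(_ adj_ab): (B_res u).
  case/existsP=> c /andP[Bc neq].
  apply/existsP; exists (tg c); rewrite inE Bc /= !(dist_lex_fibre _ _ adj_uw).
  by apply: contra_neq neq => -[].
Qed.

End Connected.
End Lexicographic.

Theorem mainTheorem5 (G : sgraph) (H : G -> sgraph) :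
  2 <= #|G| ->
  connected_graph (@adj G) ->
  bipartite (@adj G) ->
  (exists i : G, ~ in_classG (H i)) ->
  local_metric_dim (@lex_adj G H) = \sum_(i : G) local_adj_dim (@adj (H i)).
Proof.
move=> G_nontrivial G_conn [f f_bip] [i notG]; apply/eqP; rewrite eqn_leq.
apply/andP; split.
  have [B [B_basis Bi_far]] := bases_avoiding_nbhds notG.
  have B_res u := (B_basis u).1.
  have res_S := lex_resolving_bases G_conn G_nontrivial f_bip B_res Bi_far.
  apply: leq_trans (local_dim_le res_S) _; rewrite card_lex_fibres.
  apply: leq_sum => u _; rewrite -(B_basis u).2.
  by apply/subset_leq_card/subsetP => a; rewrite !inE.
have res_T := local_resolving_dist_setT (@lex_adj_irr G H).
rewrite /local_metric_dim; have [S res_S <-] := local_dim_attained res_T.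
rewrite card_lex_fibres; apply: leq_sum => u _.
by apply: local_dim_le; apply: lex_resolving_fibre.
Qed.
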